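(* Let $\mathbf{A}\in\mathbb{R}^{n\times d}$ have columns normalized so that $\mathrm{diag}(\mathbf{A}^T\mathbf{A})=\mathbf{1}$, let $\mathbf{y}\in\mathbb{R}^n$, $\lambda\ge 0$, and let $\hat{\mathbf{A}}=[\mathbf{A},\,-\mathbf{A}]\in\mathbb{R}^{n\times 2d}$. Consider the (duplicated-feature) Lasso objective $$F(\mathbf{x})=\tfrac12\lVert \hat{\mathbf{A}}\mathbf{x}-\mathbf{y}\rVert_2^2+\lambda\sum_{j=1}^{2d}x_j,\qquad \mathbf{x}\in\mathbb{R}^{2d}_+.$$ Fix $\mathbf{x}\in\mathbb{R}^{2d}_+$ and an integer $P\ge1$. Let $\mathcal{P}_t=\{i_1,\dots,i_P\}$ be a multiset of indices in $\{1,\dots,2d\}$ (as chosen in one iteration of Shotgun), for each $j$ let $\delta x_j=\max\{-x_j,\,-(\nabla F(\mathbf{x}))_j\}$ (the Shooting update with $\beta=1$), and let $\Delta\mathbf{x}\in\mathbb{R}^{2d}$ be the collective update $(\Delta\mathbf{x})_k=\sum_{i_j\in\mathcal{P}_t:\,i_j=k}\delta x_{i_j}$. Then $$F(\mathbf{x}+\Delta\mathbf{x})-F(\mathbf{x})\le -\tfrac12\sum_{i_j\in\mathcal{P}_t}(\delta x_{i_j})^2+\tfrac12\sum_{\substack{i_j,i_k\in\mathcal{P}_t\\ j\ne k}}(\hat{\mathbf{A}}^T\hat{\mathbf{A}})_{i_j,i_k}\,\delta x_{i_j}\,\delta x_{i_k}.$$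
   Context: Shotgun (parallel stochastic coordinate descent) starts at $\mathbf{x}=\mathbf{0}\in\mathbb{R}^{2d}_+$ and in each iteration chooses $P$ indices $i_1,\dots,i_P$ independently and uniformly at random from $\{1,\dots,2d\}$ (forming a multiset $\mathcal{P}_t$), computes for each chosen index $j$ the update $\delta x_j=\max\{-x_j,-(\nabla F(\mathbf{x}))_j/\beta\}$ at the current $\mathbf{x}$, and applies all of them simultaneously, giving the collective update $\Delta\mathbf{x}$. For the Lasso $\beta=1$. The matrix written $\mathbf{A}^T\mathbf{A}$ in the paper's statement is the Gram matrix of the (duplicated) design matrix indexing the $2d$ coordinates, here $\hat{\mathbf{A}}^T\hat{\mathbf{A}}$. *)

From HB Require Import structures.
From mathcomp Require Import all_boot all_order all_algebra.
Set Implicit Arguments. Unset Strict Implicit. Unset Printing Implicit Defensive.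
Import Order.TTheory GRing.Theory Num.Theory.
Local Open Scope ring_scope.

Section Lasso.
Variables (R : realFieldType) (n d : nat).
Implicit Types (A : 'M[R]_(n, d)) (y : 'cV[R]_n) (x : 'cV[R]_(d + d)).

Definition Ahat A : 'M[R]_(n, d + d) := row_mx A (- A).

Definition lassoF A y (lambda : R) x : R :=
  2^-1 * \sum_(i < n) ((Ahat A *m x - y) i 0) ^+ 2
  + lambda * \sum_(j < d + d) x j 0.

Definition lassoGrad A y (lambda : R) x : 'cV[R]_(d + d) :=
  (Ahat A)^T *m (Ahat A *m x - y) + const_mx lambda.

Definition shoot A y (lambda : R) x (j : 'I_(d + d)) : R :=
  Num.max (- x j 0) (- lassoGrad A y lambda x j 0).

Definition shotgun_update A y (lambda : R) x (P : nat) (idx : 'I_P -> 'I_(d + d))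
  : 'cV[R]_(d + d) :=
  \col_k \sum_(j < P | idx j == k) shoot A y lambda x (idx j).
End Lasso.

From HB Require Import structures.
From mathcomp Require Import all_boot all_order all_algebra.
From mathcomp Require Import ring lra.
Set Implicit Arguments. Unset Strict Implicit. Unset Printing Implicit Defensive.
Import Order.TTheory GRing.Theory Num.Theory.
Local Open Scope ring_scope.

(* F is quadratic, so F(x + u) - F(x) equals grad F(x) . u + 1/2 ||Ahat u||^2
   exactly.  For the Shotgun update u, built from Shooting steps
   s_j = max(-x_j, -g_j) with g = grad F(x) and x_j >= 0, each step satisfies
   g_j s_j <= - s_j^2, so the gradient term is at most - sum_j s_j^2.  Expanding
   ||Ahat u||^2 along the multiset gives sum_{j,k} G_{i_j i_k} s_j s_k for the
   Gram matrix G = Ahat^T Ahat, whose diagonal is 1 because the columns of A are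
   normalized; the diagonal terms thus contribute + 1/2 sum_j s_j^2. *)

Definition scatter_col (R : nmodType) (N P : nat) (idx : 'I_P -> 'I_N)
  (s : 'I_P -> R) : 'cV[R]_N :=
  \col_k \sum_(j < P | idx j == k) s j.

Lemma sum_mul_scatter_col (R : pzSemiRingType) (N P : nat) (idx : 'I_P -> 'I_N)
  (f : 'I_N -> R) (s : 'I_P -> R) :
  \sum_(k < N) f k * scatter_col idx s k 0 = \sum_(j < P) f (idx j) * s j.
Proof.
under eq_bigr => k _ do rewrite mxE big_mkcond mulr_sumr.
rewrite exchange_big /=; apply: eq_bigr => j _.
rewrite (bigD1 (idx j)) //= eqxx big1 ?addr0 // => k /negPf neq_k.
by rewrite eq_sym neq_k mulr0.
Qed.

Lemma quad_form_scatter_col (R : comPzSemiRingType) (N P : nat)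
  (idx : 'I_P -> 'I_N) (M : 'M[R]_N) (s : 'I_P -> R) :
  \sum_(a < N) \sum_(b < N)
    M a b * scatter_col idx s a 0 * scatter_col idx s b 0
  = \sum_(j < P) \sum_(k < P) M (idx j) (idx k) * s j * s k.
Proof.
transitivity (\sum_(a < N) (\sum_(k < P) M a (idx k) * s k) * scatter_col idx s a 0).
  apply: eq_bigr => a _; rewrite -sum_mul_scatter_col mulr_suml.
  by apply: eq_bigr => b _; rewrite mulrAC.
rewrite (sum_mul_scatter_col idx (fun a => \sum_(k < P) M a (idx k) * s k)).
by apply: eq_bigr => j _; rewrite mulr_suml; apply: eq_bigr => k _; rewrite mulrAC.
Qed.

Lemma sum_sqr_mulmx (R : comPzRingType) (m N : nat) (B : 'M[R]_(m, N))
  (u : 'cV[R]_N) :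
  \sum_(i < m) (B *m u) i 0 ^+ 2
  = \sum_(a < N) \sum_(b < N) (B^T *m B) a b * u a 0 * u b 0.
Proof.
under eq_bigr => i _ do rewrite expr2 !mxE mulr_suml.
under eq_bigr => i _ do under eq_bigr => a _ do rewrite mulr_sumr.
rewrite exchange_big /=; apply: eq_bigr => a _.
rewrite exchange_big /=; apply: eq_bigr => b _.
rewrite !mxE !mulr_suml; apply: eq_bigr => i _; rewrite mxE; ring.
Qed.

Lemma sum_diag_offdiag (R : nmodType) (P : nat) (a : 'I_P -> 'I_P -> R) :
  \sum_(j < P) \sum_(k < P) a j k
  = \sum_(j < P) a j j + \sum_(j < P) \sum_(k < P | j != k) a j k.
Proof.
rewrite -big_split; apply: eq_bigr => j _ /=.
by rewrite (bigD1 j) //=; under eq_bigl => k do rewrite eq_sym.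
Qed.

Lemma gram_Ahat (R : realFieldType) (n d : nat) (A : 'M[R]_(n, d)) :
  (Ahat A)^T *m Ahat A
  = block_mx (A^T *m A) (- (A^T *m A)) (- (A^T *m A)) (A^T *m A).
Proof.
have trN : (- A)^T = - A^T by apply/matrixP => i j; rewrite !mxE.
by rewrite /Ahat tr_row_mx mul_col_row trN mulmxN mulNmx mulNmx mulmxN opprK.
Qed.

Lemma gram_Ahat_diag (R : realFieldType) (n d : nat) (A : 'M[R]_(n, d)) :
  (forall j : 'I_d, (A^T *m A) j j = 1) ->
  forall k : 'I_(d + d), ((Ahat A)^T *m Ahat A) k k = 1.
Proof.
move=> normA k; rewrite gram_Ahat.
by case: (split_ordP k) => j ->; rewrite ?block_mxEul ?block_mxEdr normA.
Qed.

Lemma lassoF_addE (R : realFieldType) (n d : nat) (A : 'M[R]_(n, d))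
  (y : 'cV[R]_n) (lambda : R) (x u : 'cV[R]_(d + d)) :
  lassoF A y lambda (x + u)
  = lassoF A y lambda x + \sum_(k < d + d) lassoGrad A y lambda x k 0 * u k 0
    + 2^-1 * \sum_(i < n) (Ahat A *m u) i 0 ^+ 2.
Proof.
set Ah := Ahat A; set v := Ah *m x - y.
have resE i : (Ah *m (x + u) - y) i 0 = v i 0 + (Ah *m u) i 0.
  by rewrite mulmxDr addrAC !mxE.
have crossE : \sum_(i < n) v i 0 * (Ah *m u) i 0
              = \sum_(k < d + d) (Ah^T *m v) k 0 * u k 0.
  under eq_bigr => i _ do rewrite [(Ah *m u) i 0]mxE mulr_sumr.
  rewrite exchange_big /=; apply: eq_bigr => k _.
  rewrite [(Ah^T *m v) k 0]mxE mulr_suml; apply: eq_bigr => i _.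
  by rewrite [Ah^T k i]mxE mulrA [v i 0 * _]mulrC.
have gradE : \sum_(k < d + d) lassoGrad A y lambda x k 0 * u k 0
             = \sum_(k < d + d) (Ah^T *m v) k 0 * u k 0
               + lambda * \sum_(k < d + d) u k 0.
  by rewrite mulr_sumr -big_split; apply: eq_bigr => k _; rewrite !mxE mulrDl.
rewrite /lassoF -/Ah -/v gradE -crossE.
under eq_bigr => i _ do rewrite resE sqrrD.
under [X in lambda * X]eq_bigr => k _ do rewrite mxE.
rewrite !big_split /=; lra.
Qed.

Lemma mul_max_opp_le (R : realDomainType) (a g : R) : 0 <= a ->
  g * Num.max (- a) (- g) <= - Num.max (- a) (- g) ^+ 2.
Proof.
move=> a_ge0; rewrite expr2; case: (leP (- a) (- g)) => [_|]; first lra.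
by rewrite ltrN2 => lt_ga; nra.
Qed.

Lemma shoot_descent (R : realFieldType) (n d : nat) (A : 'M[R]_(n, d))
  (y : 'cV[R]_n) (lambda : R) (x : 'cV[R]_(d + d)) (j : 'I_(d + d)) :
  0 <= x j 0 ->
  lassoGrad A y lambda x j 0 * shoot A y lambda x j <= - shoot A y lambda x j ^+ 2.
Proof. exact: mul_max_opp_le. Qed.

Theorem theorem3p1 (R : realFieldType) (n d : nat) (A : 'M[R]_(n, d))
  (y : 'cV[R]_n) (lambda : R) (x : 'cV[R]_(d + d)) (P : nat)
  (idx : 'I_P -> 'I_(d + d)) :
  (forall j : 'I_d, (A^T *m A) j j = 1) ->
  0 <= lambda ->
  (forall j : 'I_(d + d), 0 <= x j 0) ->
  (0 < P)%N ->
  lassoF A y lambda (x + shotgun_update A y lambda x idx) - lassoF A y lambda x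
  <= - 2^-1 * \sum_(j < P) (shoot A y lambda x (idx j)) ^+ 2
     + 2^-1 * \sum_(j < P) \sum_(k < P | j != k)
          ((Ahat A)^T *m Ahat A) (idx j) (idx k)
          * shoot A y lambda x (idx j) * shoot A y lambda x (idx k).
Proof.
move=> normA _ x_ge0 _.
set s := fun j : 'I_P => shoot A y lambda x (idx j).
have -> : shotgun_update A y lambda x idx = scatter_col idx s by [].
rewrite lassoF_addE sum_mul_scatter_col sum_sqr_mulmx quad_form_scatter_col.
have diagE : \sum_(j < P) ((Ahat A)^T *m Ahat A) (idx j) (idx j) * s j * s j
              = \sum_(j < P) s j ^+ 2.
  by apply: eq_bigr => j _; rewrite gram_Ahat_diag // mul1r expr2.
rewrite sum_diag_offdiag diagE.
have descent : \sum_(j < P) lassoGrad A y lambda x (idx j) 0 * s j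
               <= - \sum_(j < P) s j ^+ 2.
  by rewrite -sumrN; apply: ler_sum => j _; apply: shoot_descent.
lra.
Qed.
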